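(* Let $T$ be RC-viable with respect to $S$. Then one of the following holds: (i) there is an edge $(u,v)$ of $T_{H(S)}$, with $v$ the parent of $u$, that satisfies the reaching criterion; or (ii) $T$ is recursively self-sufficient; in particular $V$ can be partitioned into subtrees $Q_s$, $s\in S$, with $s\in Q_s$ and $f(Q_s,s)\le\mathcal{T}$.
   Context: Let $T_{\mathrm{in}}=(V_{\mathrm{in}},E_{\mathrm{in}})$ be a finite tree; subtrees are identified with their vertex sets. $f:2^{V_{\mathrm{in}}}\times V_{\mathrm{in}}\to[0,+\infty]$ is minmax monotone: (1) $f(\{s\},s)=0$, and $f(U,s)=+\infty$ if $U$ is not a subtree or $s\notin U$; (2) $s\in U_1\subseteq U_2\Rightarrow f(U_1,s)\le f(U_2,s)$; (3) if $U$ is a subtree, $s\notin U$, and $s$ is adjacent to $u\in U$, then $f(U\cup\{s\},s)\ge f(U,u)$; (4) if $U$ is a subtree, $s\in U$, and $U_1,\dots,U_t$ are the vertex sets of the components of the tree induced by $U$ minus $s$, then $f(U,s)=\max_i f(U_i\cup\{s\},s)$. Fix $\mathcal{T}\ge0$. $T=(V,E)$ is a subtree of $T_{\mathrm{in}}$ and $S\subseteq V$ a set of leaves of $T$ with $|S|\ge2$, $|V|>2$. For an edge $(u,v)$, $T_{-v}(u)$ is the component of $T-v$ containing $u$, with vertex set $V_{-v}(u)$. Hub tree: $V_{H(S)}$ is the union of the vertex sets of the paths in $T$ between all pairs of sinks in $S$; $T_{H(S)}$ is the subtree induced by $V_{H(S)}$, and $T$ is rooted at a non-sink vertex $r\in V_{H(S)}$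 such that at least two of the components of $T-r$ contain sinks; for $w\in V$, $T(w)=(V(w),E(w))$ is the subtree consisting of $w$ and its descendants (so $T(r)=T$). If $w\in V_{H(S)}$ and $\eta\notin V_{H(S)}$ is a neighbour of $w$, then $T_{-w}(\eta)$ is an outstanding branch attached to $w$. $T$ is RC-viable with respect to $S$ if for every outstanding branch with vertex set $V'$ attached to $w\in V_{H(S)}$, $f(V'\cup\{w\},w)\le\mathcal{T}$. $\mathrm{BP}(a,a)$, for $a\in V_{H(S)}$, is $a$ together with the vertices of all outstanding branches attached to $a$. A subtree $T'$ with vertex set $V'$ is self-sufficient if $V'$ can be partitioned into subtrees $Q_s$, $s\in S\cap V'$, with $s\in Q_s$ and $f(Q_s,s)\le\mathcal{T}$. $T(v)$ ($v\in V_{H(S)}$) is recursively self-sufficient if $T(w)$ is self-sufficient for every $w\in V_{H(S)}\cap V(v)$; $T$ is recursively self-sufficient if $T(r)$ is. The ordered pair $(u,v)\in V_{H(S)}\times V_{H(S)}$ satisfies the reaching criterion if $v$ is the parent of $u$ in $T_{H(S)}$, $T_{-v}(u)$ is self-sufficient, and the subtree induced by $\mathrm{BP}(v,v)\cup V_{-v}(u)$ is not self-sufficient. *)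

From HB Require Import structures.
From mathcomp Require Import all_boot all_order all_algebra.
Set Implicit Arguments. Unset Strict Implicit. Unset Printing Implicit Defensive.
Import Order.TTheory GRing.Theory Num.Theory.
Local Open Scope ring_scope.

(* ---------- extended nonnegative values [0,+oo] : None = +oo ---------- *)
Definition ext (R : realFieldType) := option R.

Definition ele (R : realFieldType) (a b : ext R) : bool :=
  match a, b with
  | _, None => true
  | None, Some _ => false
  | Some x, Some y => x <= y
  end.

Definition emax (R : realFieldType) (a b : ext R) : ext R :=
  match a, b with
  | None, _ => None
  | _, None => None
  | Some x, Some y => Some (Num.max x y)
  end.

Section Graph.
Variables (VT : finType) (e : rel VT).

Definition restrict (W : {set VT}) : rel VT :=
  [rel a b | [&& a \in W, b \in W & e a b]].

Definition is_tree : Prop :=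
  [/\ symmetric e, irreflexive e, (forall x y, connect e x y) &
      (forall x p, (2 <= size p)%N -> path e x p -> uniq (x :: p) -> ~~ e (last x p) x)].

Definition subtree (U : {set VT}) : bool :=
  (U != set0) && [forall x in U, forall y in U, connect (restrict U) x y].

Definition comp (W : {set VT}) (x : VT) : {set VT} :=
  [set y in W | connect (restrict W) x y].

Definition components (W : {set VT}) : {set {set VT}} :=
  [set comp W x | x in W].

Definition on_path (V : {set VT}) (x y z : VT) : Prop :=
  exists p : seq VT,
    [&& path (restrict V) x p, last x p == y, uniq (x :: p) & z \in x :: p].

Definition leaf (V : {set VT}) (s : VT) : bool :=
  (s \in V) && (#|[set y in V | e s y]| == 1)%N.

Definition minmax_monotone (R : realFieldType) (f : {set VT} -> VT -> ext R) : Prop :=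
  (forall U s, ele (Some 0) (f U s)) /\
  [/\ (forall s, f [set s] s = Some 0),
      (forall U s, ~~ subtree U || (s \notin U) -> f U s = None),
      (forall U1 U2 s, subtree U1 -> subtree U2 -> s \in U1 -> U1 \subset U2 ->
          ele (f U1 s) (f U2 s)),
      (forall U s u, subtree U -> s \notin U -> u \in U -> e s u ->
          ele (f U u) (f (s |: U) s))
    & (forall U s, subtree U -> s \in U ->
          f U s = \big[@emax R / Some 0]_(C in components (U :\ s)) f (s |: C) s)].

Section Hub.
Variables (V S : {set VT}).

Definition hub (z : VT) : Prop :=
  exists s s', [/\ s \in S, s' \in S, s != s' & on_path V s s' z].

Definition good_root (r : VT) : Prop :=
  [/\ r \in V, r \notin S, hub r &
      exists C1 C2, [/\ C1 \in components (V :\ r), C2 \in components (V :\ r), C1 != C2,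
                       C1 :&: S != set0 & C2 :&: S != set0]].

Variable r : VT.

Definition parent (v u : VT) : Prop :=
  [/\ u \in V, v \in V, e u v & on_path V u r v].

(* vertex set V(w) of the subtree T(w) (w and its descendants) *)
Definition desc (w : VT) (x : VT) : Prop := x \in V /\ on_path V x r w.

Definition BP (a : VT) (x : VT) : Prop :=
  x = a \/ exists eta, [/\ eta \in V, e a eta, ~ hub eta & x \in comp (V :\ a) eta].

Definition rc_viable (R : realFieldType) (f : {set VT} -> VT -> ext R) (Tm : R) : Prop :=
  forall w eta, hub w -> eta \in V -> e w eta -> ~ hub eta ->
    ele (f (w |: comp (V :\ w) eta) w) (Some Tm).

Definition self_sufficient (R : realFieldType) (f : {set VT} -> VT -> ext R) (Tm : R)
    (P : VT -> Prop) : Prop :=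
  exists Q : VT -> {set VT},
    [/\ (forall s, s \in S -> P s ->
           [/\ subtree (Q s), s \in Q s & ele (f (Q s) s) (Some Tm)]),
        (forall s s', s \in S -> P s -> s' \in S -> P s' -> s != s' ->
           [disjoint Q s & Q s'])
      & (forall x, P x <-> exists s, [/\ s \in S, P s & x \in Q s])].

Definition recursively_self_sufficient (R : realFieldType) (f : {set VT} -> VT -> ext R)
    (Tm : R) : Prop :=
  forall w, hub w -> desc r w -> self_sufficient f Tm (desc w).

Definition reaching (R : realFieldType) (f : {set VT} -> VT -> ext R) (Tm : R)
    (u v : VT) : Prop :=
  [/\ hub u, hub v, parent v u,
      self_sufficient f Tm (fun x => x \in comp (V :\ v) u)
    & ~ self_sufficient f Tm (fun x => BP v x \/ x \in comp (V :\ v) u)].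

End Hub.
End Graph.

(* Suppose no edge (u, v) of the hub tree satisfies the reaching criterion. Then
   every T(w), w in the hub tree, is self-sufficient, by induction on |V(w)|.
   A sink w is a leaf, so V(w) = {w} and Q_w = {w} works since f({w}, w) = 0.
   Otherwise w has a hub child a0, and V(w) is the disjoint union of
   BP(w,w) u V_{-w}(a0) and of the branches V_{-w}(a) = V(a) of the other hub
   children a of w. These branches are self-sufficient by induction, hence so is
   V_{-w}(a0), and then BP(w,w) u V_{-w}(a0) is self-sufficient because (a0, w)
   does not satisfy the reaching criterion. Partitions of disjoint vertex sets
   glue together. *)

From Pilot Require Import Defs.
From HB Require Import structures.
From mathcomp Require Import all_boot all_order all_algebra.
From Stdlib Require Import Classical ClassicalEpsilon.
Set Implicit Arguments. Unset Strict Implicit. Unset Printing Implicit Defensive.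

Section SelfSufficiency.
Variables (VT : finType) (e : rel VT) (S : {set VT}) (R : realFieldType)
  (f : {set VT} -> VT -> ext R) (Tm : R).

Local Notation ss := (self_sufficient e S f Tm).

Definition ss_partition (P : VT -> Prop) (Q : VT -> {set VT}) :=
  [/\ (forall s, s \in S -> P s ->
         [/\ subtree e (Q s), s \in Q s & ele (f (Q s) s) (Some Tm)]),
      (forall s s', s \in S -> P s -> s' \in S -> P s' -> s != s' ->
         [disjoint Q s & Q s'])
    & (forall x, P x <-> exists s, [/\ s \in S, P s & x \in Q s])].

Lemma ss_partition_sub P Q s x :
  ss_partition P Q -> s \in S -> P s -> x \in Q s -> P x.
Proof. by case=> _ _ PQ sS Ps xQ; apply/PQ; exists s. Qed.

Lemma self_sufficient_ext (P P' : VT -> Prop) :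
  (forall x, P x <-> P' x) -> ss P -> ss P'.
Proof.
move=> PP' [Q [Q1 Q2 Q3]]; exists Q; split.
- by move=> s sS /PP'; apply: Q1.
- by move=> s s' sS /PP' Ps s'S /PP' Ps'; apply: Q2.
- by move=> x; rewrite -PP' Q3; split=> -[s [sS /PP' Ps xQ]]; exists s.
Qed.

Lemma self_sufficient0 : ss (fun _ => False).
Proof. by exists (fun _ => set0); split=> // x; split=> // -[s []]. Qed.

Lemma self_sufficient_if (A : Prop) (P : VT -> Prop) :
  (A -> ss P) -> ss (fun x => A /\ P x).
Proof.
case: (classic A) => [a /(_ a)|na _].
  by apply: self_sufficient_ext => x; split=> [|[]].
by apply: self_sufficient_ext self_sufficient0 => x; split=> [|[]].
Qed.

Lemma self_sufficientU (P1 P2 : VT -> Prop) :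
  (forall x, P1 x -> P2 x -> False) -> ss P1 -> ss P2 ->
  ss (fun x => P1 x \/ P2 x).
Proof.
move=> P12 [Q1 hQ1] [Q2 hQ2].
have [[Q11 Q12 Q13] [Q21 Q22 Q23]] := (hQ1, hQ2).
have sub1 := ss_partition_sub hQ1; have sub2 := ss_partition_sub hQ2.
have Q12disj s s' : s \in S -> P1 s -> s' \in S -> P2 s' -> [disjoint Q1 s & Q2 s'].
  move=> sS P1s s'S P2s'; rewrite -setI_eq0; apply/eqP/setP => x.
  rewrite !inE; apply/negbTE/negP => /andP[/(sub1 _ _ sS P1s) P1x].
  by move/(sub2 _ _ s'S P2s'); apply: P12.
pose Q s := if excluded_middle_informative (P1 s) then Q1 s else Q2 s.
have QE1 s : P1 s -> Q s = Q1 s by rewrite /Q; case: excluded_middle_informative.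
have QE2 s : ~ P1 s -> Q s = Q2 s by rewrite /Q; case: excluded_middle_informative.
exists Q; split.
- move=> s sS; case: (classic (P1 s)) => [P1s _|nP1s [//|P2s]].
    by rewrite QE1 //; apply: Q11.
  by rewrite QE2 //; apply: Q21.
- move=> s s' sS Ps s'S Ps' ss'.
  case: (classic (P1 s)) => P1s; case: (classic (P1 s')) => P1s'.
  + by rewrite !QE1 //; apply: Q12.
  + by case: Ps' => // P2s'; rewrite QE1 // QE2 //; apply: Q12disj.
  + case: Ps => // P2s; rewrite QE2 // QE1 // disjoint_sym.
    exact: Q12disj.
  + by case: Ps => // P2s; case: Ps' => // P2s'; rewrite !QE2 //; apply: Q22.
- move=> x; split.
    case=> [/Q13 [s [sS P1s xQ]]|/Q23 [s [sS P2s xQ]]].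
      by exists s; split=> //; [left | rewrite QE1].
    by exists s; split=> //; [right | rewrite QE2 // => /P12; apply].
  case=> s [sS Ps]; case: (classic (P1 s)) => P1s.
    by rewrite QE1 // => /(sub1 _ _ sS P1s); left.
  by rewrite QE2 //; case: Ps => // P2s /(sub2 _ _ sS P2s); right.
Qed.

Lemma self_sufficient_bigcup (I : finType) (C : I -> VT -> Prop) :
  (forall i j x, C i x -> C j x -> i = j) -> (forall i, ss (C i)) ->
  ss (fun x => exists i, C i x).
Proof.
move=> Cdisj Css.
suff ss_seq (s : seq I) : uniq s -> ss (fun x => exists2 i, i \in s & C i x).
  apply: self_sufficient_ext (ss_seq _ (enum_uniq I)) => x.
  by split=> [[i _ Ci]|[i Ci]]; exists i; rewrite ?mem_enum.
elim: s => [_|i s IH /andP[ni us]].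
  by apply: self_sufficient_ext self_sufficient0 => x; split=> // -[].
apply: self_sufficient_ext (self_sufficientU _ (Css i) (IH us)).
  move=> x; split=> [[Ci|[j js Cj]]|[j]]; first by exists i; rewrite ?mem_head.
    by exists j; rewrite // inE js orbT.
  by rewrite inE => /orP[/eqP-> Ci|js Cj]; [left | right; exists j].
by move=> x Ci [j js /(Cdisj _ _ _ Ci) ij]; move: ni; rewrite ij js.
Qed.

Lemma subtree_set1 s : subtree e [set s].
Proof.
apply/andP; split; first by apply/set0Pn; exists s; rewrite inE.
by apply/forallP => x; apply/implyP; rewrite inE => /eqP ->;
   apply/forallP => y; apply/implyP; rewrite inE => /eqP ->; exact: connect0.
Qed.

Lemma self_sufficient1 s : s \in S -> f [set s] s = Some 0%R -> (0 <= Tm)%R ->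
  ss (fun x => x = s).
Proof.
move=> sS fs0 Tm0; exists (fun s => [set s]); split.
- by move=> _ _ ->; rewrite subtree_set1 set11 fs0.
- by move=> _ _ _ -> _ -> /eqP.
- move=> x; split=> [->|[_ [_ -> /set1P //]]].
  by exists s; rewrite set11.
Qed.

End SelfSufficiency.

Section Tree.
Variables (VT : finType) (e : rel VT).
Hypotheses (esym : symmetric e) (eirr : irreflexive e)
  (econn : forall x y, connect e x y)
  (nocyc : forall x p, (2 <= size p)%N -> path e x p -> uniq (x :: p) -> ~~ e (last x p) x).

Definition upath x p y := [&& path e x p, last x p == y & uniq (x :: p)].

Lemma rev_path_belast x p : path e (last x p) (rev (belast x p)) = path e x p.
Proof.
rewrite rev_path; apply: eq_path => a b; exact: esym.
Qed.

Lemma no_path_avoiding x a b q : e x a -> e x b -> a != b -> path e a q -> last a q = b ->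
  x \notin a :: q -> False.
Proof.
move=> xa xb ab pr; move: (shortenP pr) => [p' pp' uq' sub] lp' xr.
have nz : p' != [::] by apply/eqP => p0; move: lp' ab; rewrite p0 /= => ->; rewrite eqxx.
have xn : x \notin a :: p'.
  rewrite inE; apply/negP => /orP[/eqP xa'|/sub xr']; move: xr; rewrite inE.
    by rewrite xa' eqxx.
  by rewrite xr' orbT.
have := nocyc (x := x) (p := a :: p').
have sz : (2 <= size (a :: p'))%N by case: p' nz {pp' uq' sub lp' xn}.
move/(_ sz); rewrite /= xa pp' lp' -(esym x b) xb /=.
have U : uniq [:: x, a & p'] by rewrite /= xn.
by move/(_ isT U).
Qed.

Lemma upath_unique x p q y : upath x p y -> upath x q y -> p = q.
Proof.
elim: p x q => [|a p IH] x [|b q] //=.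
- move=> /and3P[_ /eqP /= ey _] /and3P[_ /eqP /= lq uq]; subst y.
  exfalso; move: uq; rewrite /= -{1}lq.
  by rewrite (mem_last b q).
- move=> /and3P[_ /eqP /= lp uq] /and3P[_ /eqP /= lq _].
  exfalso; move: uq; rewrite /= lq -{1}lp.
  by rewrite (mem_last a p).
move=> /and3P[/andP[xa pa] /eqP /= lp /andP[xap uap]].
move=> /and3P[/andP[xb pb] /eqP /= lq /andP[xbq ubq]].
case: (eqVneq a b) => [ab|ab].
  subst b; congr (_ :: _); apply: (IH a); apply/and3P; split=> //; apply/eqP=> //.
exfalso; apply: (no_path_avoiding xa xb ab (q := p ++ rev (belast b q))).
- rewrite cat_path; apply/andP; split=> //; rewrite lp -lq rev_path_belast //.
- rewrite last_cat lp -lq; case: q {pb lq xbq ubq} => //= c q.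
  by rewrite rev_cons last_rcons.
- rewrite -cat_cons mem_cat negb_or xap /= mem_rev.
  apply/negP => /mem_belast; exact/negP.
Qed.

Lemma exists_upath x y : exists p, upath x p y.
Proof.
move: (econn x y) => /connectP[p pp ->].
move: (shortenP pp) => [p' pp' uq' _]; exists p'; by rewrite /upath pp' eqxx uq'.
Qed.

Definition tpath x y := xchoose (exists_upath x y).
Lemma tpathP x y : upath x (tpath x y) y.
Proof. exact: (xchooseP (exists_upath x y)). Qed.
Lemma tpath_eq x p y : upath x p y -> tpath x y = p.
Proof. by move=> h; apply: upath_unique (tpathP x y) h. Qed.

Lemma tpath_path x y : path e x (tpath x y). Proof. by case/and3P: (tpathP x y). Qed.
Lemma tpath_last x y : last x (tpath x y) = y.
Proof. by case/and3P: (tpathP x y) => _ /eqP. Qed.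
Lemma tpath_uniq x y : uniq (x :: tpath x y). Proof. by case/and3P: (tpathP x y). Qed.

Lemma tpath_self x : tpath x x = [::].
Proof. by apply: tpath_eq; rewrite /upath /= eqxx. Qed.

Lemma adj_neq a b : e a b -> a != b.
Proof. by move=> ab; apply/eqP => h; move: ab; rewrite h eirr. Qed.

Lemma tpath_adj x y : e x y -> tpath x y = [:: y].
Proof.
by move=> xy; apply: tpath_eq; rewrite /upath /= xy eqxx /= inE andbT adj_neq.
Qed.

Lemma tpath_nil x y : tpath x y = [::] -> x = y.
Proof. by move=> h; have := tpath_last x y; rewrite h. Qed.

Lemma tpath_rev x y : rev (x :: tpath x y) = y :: tpath y x.
Proof.
rewrite lastI rev_rcons tpath_last; congr (_ :: _); symmetry; apply: tpath_eq.
apply/and3P; split.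
- by rewrite -{1}(tpath_last x y) rev_path_belast tpath_path.
- case: (tpath x y) (tpath_last x y) => [|c q] /= Hl; first by rewrite Hl.
  by rewrite rev_cons last_rcons.
- have := tpath_uniq x y; have := tpath_last x y; set p := tpath x y => <-.
  by rewrite -rev_rcons rev_uniq -lastI.
Qed.

Definition between x z y := z \in x :: tpath x y.

Lemma between_sym x z y : between x z y -> between y z x.
Proof. by rewrite /between -tpath_rev mem_rev. Qed.

Lemma between_left x y : between x x y. Proof. exact: mem_head. Qed.
Lemma between_right x y : between x y y.
Proof. by rewrite /between -{1}(tpath_last x y) mem_last. Qed.

Lemma tpath_split x z y : between x z y -> tpath x y = tpath x z ++ tpath z y.
Proof.
rewrite /between inE => /orP[/eqP ->|]; first by rewrite tpath_self.
move: (tpathP x y); set p := tpath x y => hup zp.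
case/path.splitP: zp hup => p1 p2 /and3P[pp /eqP lp uq'].
rewrite (tpath_eq (x := x) (p := rcons p1 z) (y := z)); last first.
  apply/and3P; split.
  - by move: pp; rewrite cat_path => /andP[].
  - by rewrite last_rcons.
  - by move: uq'; rewrite -cat_cons cat_uniq => /andP[].
rewrite (tpath_eq (x := z) (p := p2) (y := y)) //.
apply/and3P; split.
- by move: pp; rewrite cat_path last_rcons => /andP[].
- by rewrite -lp last_cat last_rcons.
- by move: uq'; rewrite cat_rcons -cat_cons cat_uniq => /and3P[_ _].
Qed.

Lemma tpath_join x z y :
  uniq (x :: tpath x z ++ tpath z y) -> tpath x y = tpath x z ++ tpath z y.
Proof.
move=> u; apply: tpath_eq; apply/and3P; split=> //.
- by rewrite cat_path tpath_path tpath_last tpath_path.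
- by rewrite last_cat tpath_last tpath_last.
Qed.

Lemma between_join x z y : uniq (x :: tpath x z ++ tpath z y) -> between x z y.
Proof.
move=> u; rewrite /between (tpath_join u) -cat_cons mem_cat -{1}(tpath_last x z) mem_last //.
Qed.

(* The first step of the path from w to x; it is w itself when x = w. *)
Definition toward w x := head w (tpath w x).

Lemma tpath_cons w x : x != w -> tpath w x = toward w x :: behead (tpath w x).
Proof.
move=> xw; rewrite /toward; case h: (tpath w x) => [|a q] //=.
by move: xw; rewrite (tpath_nil h) eqxx.
Qed.

Lemma toward_adj w x : x != w -> e w (toward w x).
Proof. move=> xw; have := tpath_path w x; rewrite (tpath_cons xw) /= => /andP[] //. Qed.

Lemma toward_in w x : x != w -> toward w x \in tpath w x.
Proof. by move=> xw; rewrite (tpath_cons xw) mem_head. Qed.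

Lemma toward_prefix w z x : between w z x -> z != w -> toward w z = toward w x.
Proof.
move=> bz zw; rewrite /toward (tpath_split bz) (tpath_cons zw) //.
Qed.

Lemma toward_self_adj w a : e w a -> toward w a = a.
Proof. by move=> wa; rewrite /toward tpath_adj. Qed.

Lemma toward_neq_between x w y : x != w -> y != w -> toward w x != toward w y -> between x w y.
Proof.
move=> xw yw nxy; apply: between_join; rewrite -cat_cons cat_uniq tpath_uniq.
have := tpath_uniq w y; rewrite /= => /andP[wy ->]; rewrite andbT.
apply/hasPn => z zy; apply/negP => zx.
have zw : z != w by apply/eqP => zw; subst z; rewrite zy in wy.
have h1 : toward w z = toward w y by apply: toward_prefix; rewrite // /between inE zy orbT.
have h2 : toward w z = toward w x by apply: toward_prefix => //; apply: between_sym.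
by move: nxy; rewrite -h1 -h2 eqxx.
Qed.

Lemma between_toward_neq x w y : between x w y -> x != w -> y != w -> toward w x != toward w y.
Proof.
move=> bw xw yw; apply/eqP => h.
have := tpath_uniq x y; rewrite (tpath_split bw) -cat_cons cat_uniq => /and3P[_ /hasPn H _].
have a1 : toward w y \in tpath w y by apply: toward_in.
have a2 : toward w x \in x :: tpath x w by rewrite -mem_rev tpath_rev inE toward_in ?orbT.
by move: (H _ a1); rewrite -h a2.
Qed.

Lemma restrict_path (W : {set VT}) a s : path (restrict e W) a s -> path e a s.
Proof. by apply: sub_path => u v /and3P[]. Qed.

Lemma restrict_path_all (W : {set VT}) a s : path (restrict e W) a s -> all (mem W) s.
Proof.
elim: s a => //= b s IH a /andP[/and3P[_ bW _] ps]; rewrite bW /=; exact: IH ps.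
Qed.

Lemma path_restrict (W : {set VT}) a s :
  a \in W -> path e a s -> all (mem W) s -> path (restrict e W) a s.
Proof.
elim: s a => //= b s IH a aW /andP[ab ps] /andP[bW aS].
apply/andP; split; first by rewrite /restrict /= aW bW ab.
exact: IH.
Qed.

Section Subtree.
Variable V : {set VT}.
Hypothesis Vconn : forall x y, x \in V -> y \in V -> connect (restrict e V) x y.

Lemma tpathV x y : x \in V -> y \in V -> path (restrict e V) x (tpath x y).
Proof.
move=> xV yV; move: (Vconn xV yV) => /connectP[p pp ->].
move: (shortenP pp) => [p' pp' uq' _].
by rewrite (tpath_eq (p := p')) // /upath (restrict_path pp') eqxx uq'.
Qed.

Lemma tpathV_mem x y z : x \in V -> y \in V -> z \in x :: tpath x y -> z \in V.
Proof.
move=> xV yV; rewrite inE => /orP[/eqP -> //|].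
by move: (restrict_path_all (tpathV xV yV)) => /allP H /H.
Qed.

Lemma on_path_between x y z : x \in V -> y \in V -> on_path e V x y z <-> between x z y.
Proof.
move=> xV yV; split.
  case=> p /and4P[pp /eqP lp uq' zp].
  by rewrite /between (tpath_eq (p := p)) // /upath (restrict_path pp) lp eqxx uq'.
move=> bz; exists (tpath x y); rewrite tpathV // tpath_last eqxx tpath_uniq; exact: bz.
Qed.

Lemma mem_comp_toward w a x : w \in V -> a \in V -> e w a ->
  (x \in Defs.comp e (V :\ w) a) = [&& x \in V, x != w & toward w x == a].
Proof.
move=> wV aV wa.
have aw : a != w by rewrite eq_sym adj_neq.
rewrite /comp inE in_setD1; apply/andP/and3P.
  case=> /andP[xw xV] /connectP[p pp lp]; split=> //.
  move: lp; move: (shortenP pp) => [p' pp' uq' _] lp'.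
  rewrite /toward (tpath_eq (p := a :: p')) //.
  rewrite /upath /= wa (restrict_path pp') -lp' eqxx /=.
  move: uq'; rewrite /= => /andP[-> ->]; rewrite !andbT.
  rewrite inE negb_or eq_sym aw /=.
  move: (restrict_path_all pp') => /allP H; apply/negP => /H; rewrite /= !inE eqxx //.
case=> xV xw /eqP nbx; split; first by rewrite xw xV.
have hc := tpath_cons xw; rewrite nbx in hc.
have ha : tpath a x = behead (tpath w x).
  apply: tpath_eq; have := tpathP w x; rewrite hc /upath /=.
  by case/and3P=> /andP[_ ->] -> /andP[_ ->].
apply/connectP; exists (tpath a x); last by rewrite tpath_last.
apply: path_restrict; first by rewrite in_setD1 aw.
  exact: tpath_path.
apply/allP => z zq; rewrite /= !inE; apply/andP; split.
  apply/eqP => zw; subst z; move: (tpath_uniq w x); rewrite hc -ha /= inE zq orbT //.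
apply: (tpathV_mem wV xV); rewrite hc -ha inE inE zq !orbT //.
Qed.

Lemma between_prefix a y b z : between a y b -> between a z y -> between a z b.
Proof.
move=> hy; rewrite /between (tpath_split hy) -cat_cons mem_cat => ->; by [].
Qed.

Lemma toward_off_path a y b z : between a y b -> ~~ between a z b -> toward z y = toward z a.
Proof.
move=> hy hz.
have yz : y != z by apply/eqP => yz; subst y; rewrite hy in hz.
have az : a != z by apply/eqP => az; subst a; rewrite between_left in hz.
apply/eqP; apply/negPn/negP => /(toward_neq_between yz az) /between_sym h.
by rewrite (between_prefix hy h) in hz.
Qed.

Section Hub.
Variable S : {set VT}.
Definition is_hub z := exists s s', [/\ s \in S, s' \in S, s != s' & between s z s'].

Lemma hub_convex w1 w2 z : is_hub w1 -> is_hub w2 -> between w1 z w2 -> is_hub z.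
Proof.
move=> [s1 [s2 [s1S s2S s12 b1]]] [s3 [s4 [s3S s4S s34 b3]]] bz.
case: (boolP (between s1 z s2)) => h1; first by exists s1, s2.
case: (boolP (between s3 z s4)) => h3; first by exists s3, s4.
have w1z : w1 != z by apply/eqP => wz; subst w1; rewrite b1 in h1.
have w2z : w2 != z by apply/eqP => wz; subst w2; rewrite b3 in h3.
have n1 := toward_off_path b1 h1; have n3 := toward_off_path b3 h3.
have s1z : s1 != z by apply/eqP => sz; subst s1; rewrite between_left in h1.
have s3z : s3 != z by apply/eqP => sz; subst s3; rewrite between_left in h3.
have := between_toward_neq bz w1z w2z; rewrite n1 n3 => nn.
exists s1, s3; split=> //; last exact: toward_neq_between.
by apply/eqP => e13; subst s3; rewrite eqxx in nn.
Qed.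

Variable r : VT.
Hypotheses (SV : S \subset V) (leafS : forall s, s \in S -> leaf e V s)
  (rV : r \in V) (rS : r \notin S) (hubr : is_hub r).

Lemma sinkV s : s \in S -> s \in V.
Proof. by move/(subsetP SV). Qed.

Lemma hubP z : hub e V S z <-> is_hub z.
Proof.
split=> -[s [s' [sS s'S ss' zs]]]; exists s, s'; split=> //.
  exact/(on_path_between z (sinkV sS) (sinkV s'S)).
exact/(on_path_between z (sinkV sS) (sinkV s'S)).
Qed.

(* x lies below w iff x = w, w is the root, or the paths from w to x and to r
   leave w through different neighbours. *)
Definition desc_set w :=
  [set x in V | (x == w) || (w == r) || (toward w x != toward w r)].

Definition child w a := [&& a \in V, e w a & (w == r) || (a != toward w r)].

Lemma in_desc_set w : w \in V -> w \in desc_set w.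
Proof. by move=> wV; rewrite /desc_set inE wV eqxx. Qed.

Lemma descP w x : w \in V -> desc e V r w x <-> x \in desc_set w.
Proof.
move=> wV; rewrite /desc /desc_set inE; split.
  case=> xV /(on_path_between w xV rV) bw; rewrite xV /=.
  case: (eqVneq x w) => //= xw; case: (eqVneq w r) => //= wr.
  by apply: between_toward_neq bw xw _; rewrite eq_sym.
case/andP => xV h; split=> //; apply/(on_path_between w xV rV).
case: (eqVneq x w) h => [->|xw] /= h; first exact: between_left.
case: (eqVneq w r) h => [->|wr] /= h; first exact: between_right.
by apply: toward_neq_between => //; rewrite eq_sym.
Qed.

Lemma parentP w a : w \in V -> child w a -> parent e V r w a.
Proof.
move=> wV /and3P[aV wa h]; have aw : a != w by rewrite eq_sym adj_neq.
split=> //; first by rewrite esym.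
apply/(on_path_between w aV rV).
case: (eqVneq w r) h => [->|wr] /= h; first exact: between_right.
apply: toward_neq_between => //; first by rewrite eq_sym.
by rewrite (toward_self_adj wa).
Qed.

Lemma desc_set_child w a x : w \in V -> child w a ->
  (x \in desc_set a) = (x \in Defs.comp e (V :\ w) a).
Proof.
move=> wV ch; have /and3P[aV wa _] := ch; have aw : a != w by rewrite eq_sym adj_neq.
have ea : e a w by rewrite esym.
have bw : between a w r by apply/(on_path_between w aV rV); case: (parentP wV ch).
have nar : toward a r = w by rewrite /toward (tpath_split bw) (tpath_adj ea).
have ar : a != r.
  apply/eqP => ar; subst a; move: bw; rewrite /between tpath_self inE => /eqP wr.
  by move: wa; rewrite wr eirr.
rewrite mem_comp_toward // /desc_set inE nar (negbTE ar) orbF.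
case: (boolP (x \in V)) => //= xV.
case: (eqVneq x a) => [->|xa] /=; first by rewrite aw (toward_self_adj wa) eqxx.
case: (eqVneq (toward a x) w) => [nx|nx] /=.
  symmetry; apply/negbTE; apply/andP => [[xw /eqP nwx]].
  have bwa : between w a x by rewrite /between -nwx inE toward_in ?orbT.
  have := tpath_uniq w x; rewrite (tpath_split bwa) (tpath_adj wa) /= inE => /andP[H _].
  by move: H; rewrite -nx toward_in // orbT.
have wa' : w != a by rewrite eq_sym.
have bx : between x a w by apply: toward_neq_between => //; rewrite (toward_self_adj ea).
have xw : x != w by apply/eqP => xw; subst x; rewrite (toward_self_adj ea) eqxx in nx.
by rewrite xw /= -(toward_prefix (between_sym bx)) // (toward_self_adj wa) eqxx.
Qed.

Lemma desc_set_child_proper w a : w \in V -> child w a -> desc_set a \proper desc_set w.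
Proof.
move=> wV ch; have /and3P[aV wa hc] := ch.
apply/properP; split; last first.
  by exists w; rewrite ?in_desc_set // (desc_set_child _ wV ch) mem_comp_toward // eqxx andbF.
apply/subsetP => x; rewrite (desc_set_child _ wV ch) mem_comp_toward //.
case/and3P=> xV _ /eqP tx; rewrite inE xV tx /=.
by case/orP: hc => ->; rewrite ?orbT.
Qed.

Lemma desc_set_sink s x : s \in S -> x \in desc_set s -> x = s.
Proof.
move=> sS; have sV := sinkV sS; have sr : s != r by apply/eqP => sr; move: rS; rewrite -sr sS.
rewrite /desc_set inE (negbTE sr) orbF => /andP[xV].
case: (eqVneq x s) => //= xs nn; exfalso.
have rs : r != s by rewrite eq_sym.
have nbr y : y \in V -> y != s -> toward s y \in [set y in V | e s y].
  move=> yV ys; rewrite inE toward_adj // andbT.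
  by apply: (tpathV_mem sV yV); rewrite inE toward_in ?orbT.
case/andP: (leafS sS) => _ /eqP c1.
have : (#|[set toward s x; toward s r]| <= #|[set y in V | e s y]|)%N.
  apply: subset_leq_card; apply/subsetP => y.
  by case/set2P=> ->; [apply: nbr xV xs | apply: nbr rV rs].
by rewrite cards2 nn c1.
Qed.

Lemma exists_hub_child w : w \in V -> is_hub w -> w \notin S ->
  exists2 a, child w a & is_hub a.
Proof.
move=> wV [s [s' [sS s'S ss' bw]]] wS.
have sw : s != w by apply/eqP => h; subst s; rewrite sS in wS.
have s'w : s' != w by apply/eqP => h; subst s'; rewrite s'S in wS.
have nn := between_toward_neq bw sw s'w.
have step t t' : t \in S -> t' \in S -> t != t' -> between t w t' -> t' != w ->
    [&& toward w t' \in V & e w (toward w t')] /\ is_hub (toward w t').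
  move=> tS t'S tt' bt t'w; split.
    rewrite toward_adj // andbT.
    by apply: (tpathV_mem wV (sinkV t'S)); rewrite inE toward_in ?orbT.
  exists t, t'; split=> //.
  by rewrite /between (tpath_split bt) -cat_cons mem_cat toward_in ?orbT.
have [/andP[a1 a2] a3] := step s s' sS s'S ss' bw s'w.
have s's : s' != s by rewrite eq_sym.
have [/andP[b1 b2] b3] := step s' s s'S sS s's (between_sym bw) sw.
case: (eqVneq w r) => [wr|wr].
  by exists (toward w s'); rewrite // /child a1 a2 wr eqxx.
case: (eqVneq (toward w s') (toward w r)) => h.
  by exists (toward w s); rewrite // /child b1 b2 -h nn orbT.
by exists (toward w s'); rewrite // /child a1 a2 h orbT.
Qed.

Lemma mem_comp_child w a x : w \in V -> child w a ->
  x \in Defs.comp e (V :\ w) a -> x != w /\ toward w x = a.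
Proof.
move=> wV /and3P[aV wa _]; rewrite mem_comp_toward //.
by case/and3P=> _ xw /eqP.
Qed.

Lemma desc_set_children w x : w \in V ->
  x \in desc_set w <-> x = w \/ exists a, child w a /\ x \in Defs.comp e (V :\ w) a.
Proof.
move=> wV; split; last first.
  case=> [->|[a [ch xa]]]; first exact: in_desc_set.
  have /and3P[aV wa hc] := ch; move: xa; rewrite mem_comp_toward //.
  case/and3P=> xV _ /eqP tx; rewrite inE xV tx.
  by case/orP: hc => ->; rewrite ?orbT.
rewrite inE => /andP[xV hx]; case: (eqVneq x w) => [|x_w]; [by left | right].
have tV : toward w x \in V by apply: (tpathV_mem wV xV); rewrite inE toward_in ?orbT.
exists (toward w x); rewrite mem_comp_toward ?toward_adj // xV x_w eqxx.
by rewrite /child tV toward_adj //=; move: hx; rewrite (negbTE x_w).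
Qed.

Lemma BP_children w x : w \in V -> is_hub w ->
  BP e V S w x <->
  x = w \/ exists a, [/\ child w a, ~ is_hub a & x \in Defs.comp e (V :\ w) a].
Proof.
move=> wV hw; split=> [[->|[a [aV wa /hubP na xa]]]|[->|[a [/and3P[aV wa _] na xa]]]];
  [by left | right | by left | right]; last by exists a; split=> //; move/hubP.
exists a; split=> //; rewrite /child aV wa /=.
case: (eqVneq w r) => //= wr; apply: contra_notN na => /eqP ->.
by apply: (hub_convex hw hubr); rewrite /between inE toward_in ?orbT // eq_sym.
Qed.

Lemma desc_set_decomp w a0 x : w \in V -> is_hub w -> child w a0 ->
  x \in desc_set w <->
  (BP e V S w x \/ x \in Defs.comp e (V :\ w) a0) \/
  exists a, [/\ child w a, a != a0 & is_hub a] /\ x \in Defs.comp e (V :\ w) a.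
Proof.
move=> wV hw ch0; rewrite desc_set_children // BP_children //; split.
  case=> [->|[a [ch xa]]]; first by do 3 left.
  case: (classic (is_hub a)) => ha; last by left; left; right; exists a.
  case: (eqVneq a a0) => [<-|aa0]; [by left; right | by right; exists a].
by case=> [[[->|[a [ch _ xa]]]|xa0]|[a [[ch _ _] xa]]]; [left | right; exists a |
  right; exists a0 | right; exists a].
Qed.

Section NoReaching.
Variables (R : realFieldType) (f : {set VT} -> VT -> ext R) (Tm : R).
Hypotheses (f1 : forall s, f [set s] s = Some 0%R) (Tm0 : (0 <= Tm)%R).
Hypothesis noreach : ~ exists u v, reaching e V S r f Tm u v.

Local Notation ss := (self_sufficient e S f Tm).

Lemma desc_set_ss w : w \in V -> is_hub w -> ss (fun x => x \in desc_set w).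
Proof.
have [n] := ubnP #|desc_set w|; elim: n w => // n IH w lt_w wV hw.
case: (boolP (w \in S)) => wS.
  apply: self_sufficient_ext (self_sufficient1 e wS (f1 w) Tm0) => x.
  by split=> [->|/(desc_set_sink wS)]; rewrite ?in_desc_set.
have ss_child a : child w a -> is_hub a -> ss (fun x => x \in Defs.comp e (V :\ w) a).
  move=> ch ha; have /and3P[aV _ _] := ch.
  apply: self_sufficient_ext (IH a _ aV ha) => [x|]; first by rewrite (desc_set_child x wV ch).
  exact: leq_trans (proper_card (desc_set_child_proper wV ch)) lt_w.
have [a0 ch0 hub0] := exists_hub_child wV hw wS.
have ss_BP : ss (fun x => BP e V S w x \/ x \in Defs.comp e (V :\ w) a0).
  apply: NNPP => nss; apply: noreach; exists a0, w.
  by split; [apply/hubP | apply/hubP | apply: parentP | apply: ss_child |].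
pose C a x := [/\ child w a, a != a0 & is_hub a] /\ x \in Defs.comp e (V :\ w) a.
apply: self_sufficient_ext (self_sufficientU _ ss_BP (self_sufficient_bigcup (C := C) _ _)).
- by move=> x; rewrite (desc_set_decomp _ wV hw ch0).
- move=> x BPx [a [[ch aa0 ha] /(mem_comp_child wV ch) [xw txa]]].
  case: BPx => [/(BP_children _ wV hw) [xw'|[b [chb hb /(mem_comp_child wV chb) [_ txb]]]]|].
  + by rewrite xw' eqxx in xw.
  + by apply: hb; rewrite -txb txa.
  + by case/(mem_comp_child wV ch0) => _; rewrite txa => /eqP; rewrite (negbTE aa0).
- move=> a b x [[cha _ _] /(mem_comp_child wV cha) [_ <-]].
  by case=> [[chb _ _] /(mem_comp_child wV chb) [_ <-]].
- by move=> a; apply: self_sufficient_if => -[ch _ ha]; apply: ss_child.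
Qed.

Lemma self_sufficient_of_no_reaching :
  recursively_self_sufficient e V S r f Tm /\ ss (fun x => x \in V).
Proof.
split.
  move=> w /hubP hw [wV _]; apply: self_sufficient_ext (desc_set_ss wV hw) => x.
  by rewrite descP.
apply: self_sufficient_ext (desc_set_ss rV hubr) => x.
by rewrite inE eqxx orbT andbT.
Qed.

End NoReaching.
End Hub.
End Subtree.
End Tree.

Local Open Scope ring_scope.

Theorem corollary3 (R : realFieldType) (VT : finType) (e : rel VT)
    (f : {set VT} -> VT -> ext R) (Tm : R) (V S : {set VT}) (r : VT) :
  is_tree e ->
  minmax_monotone e f ->
  0 <= Tm ->
  subtree e V ->
  S \subset V ->
  (forall s, s \in S -> leaf e V s) ->
  (2 <= #|S|)%N ->
  (2 < #|V|)%N ->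
  good_root e V S r ->
  rc_viable e V S f Tm ->
  (exists u v, reaching e V S r f Tm u v) \/
  (recursively_self_sufficient e V S r f Tm /\ self_sufficient e S f Tm (fun x => x \in V)).
Proof.
move=> [esym eirr econn nocyc] [_ [f1 _ _ _ _]] Tm0 /andP[_ /forall_inP Vc] SV leafS _ _
  [rV rS hr _] _.
have Vconn x y : x \in V -> y \in V -> connect (restrict e V) x y.
  by move=> xV /(forall_inP (Vc x xV)).
case: (classic (exists u v, reaching e V S r f Tm u v)) => [|noreach]; [by left | right].
have hubr := proj1 (hubP esym econn nocyc Vconn SV r) hr.
exact: (@self_sufficient_of_no_reaching _ _ esym eirr econn nocyc _ Vconn _ _ SV leafS
  rV rS hubr _ _ _ f1 Tm0 noreach).
Qed.
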